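(* For any link amplitudes and any $\mu\in[0,1]$, at an optimal solution of problem (WSR) both users use full power, i.e. $\alpha_1^\star+\beta_1^\star=P$ and $\alpha_2^\star+\beta_2^\star=P$. Moreover, if either user performs block Markov coding ($\alpha_1^\star>0$ or $\alpha_2^\star>0$), the relay uses full power: $k_1^\star\alpha_1^\star+k_2^\star\alpha_2^\star+\beta_3^\star=P$.
   Context: Full-duplex Gaussian two-way relay channel with link amplitudes $g_{ij}\ge0$ (link from node $j$ to node $i$, nodes $1,2,r$) and power $P>0$. With $C(x)=\log(1+x)$ define $J_1=C(g_{r1}^2\beta_1)$, $J_3=C(g_{r2}^2\beta_2)$, $J_5=C(g_{r1}^2\beta_1+g_{r2}^2\beta_2)$, $J_2=C(g_{21}^2P+2g_{21}g_{2r}\sqrt{k_1}\alpha_1+g_{2r}^2k_1\alpha_1+g_{2r}^2\beta_3)$, $J_4=C(g_{12}^2P+2g_{12}g_{1r}\sqrt{k_2}\alpha_2+g_{1r}^2k_2\alpha_2+g_{1r}^2\beta_3)$. Problem (WSR): maximize $\mu R_1+(1-\mu)R_2$ over $R_1,R_2,\alpha_1,\alpha_2,\beta_1,\beta_2,\beta_3,k_1,k_2\ge0$ subject to $R_1\le\min\{J_1,J_2\}$, $R_2\le\min\{J_3,J_4\}$, $R_1+R_2\le J_5$, $\alpha_1+\beta_1\le P$, $\alpha_2+\beta_2\le P$, $k_1\alpha_1+k_2\alpha_2+\beta_3\le P$. Here $\alpha_i$ is user $i$'s power on the block Markov (repeated old message) component, $\beta_i$ its power on the new message, $k_i\alpha_i$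 the relay's power on the coherent repetition of user $i$'s old message, and $\beta_3$ the relay's power on the independently coded bin index. *)

From Stdlib Require Import Reals Lra.
Open Scope R_scope.

(* C(x) = log(1+x); natural log (the base does not affect optimality). *)
Definition Cap (x : R) : R := ln (1 + x).

(* Link gains: g21 (1 -> 2), g2r (r -> 2), g12 (2 -> 1), g1r (r -> 1),
   gr1 (1 -> r), gr2 (2 -> r). *)
Record gains := mkGains { g21 : R; g2r : R; g12 : R; g1r : R; gr1 : R; gr2 : R }.

Record wsr_var := mkVar {
  R1 : R; R2 : R; al1 : R; al2 : R; be1 : R; be2 : R; be3 : R; k1 : R; k2 : R }.

Definition J1 (g : gains) (x : wsr_var) := Cap (gr1 g ^ 2 * be1 x).
Definition J3 (g : gains) (x : wsr_var) := Cap (gr2 g ^ 2 * be2 x).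
Definition J5 (g : gains) (x : wsr_var) :=
  Cap (gr1 g ^ 2 * be1 x + gr2 g ^ 2 * be2 x).
Definition J2 (g : gains) (P : R) (x : wsr_var) :=
  Cap (g21 g ^ 2 * P + 2 * g21 g * g2r g * sqrt (k1 x) * al1 x
       + g2r g ^ 2 * k1 x * al1 x + g2r g ^ 2 * be3 x).
Definition J4 (g : gains) (P : R) (x : wsr_var) :=
  Cap (g12 g ^ 2 * P + 2 * g12 g * g1r g * sqrt (k2 x) * al2 x
       + g1r g ^ 2 * k2 x * al2 x + g1r g ^ 2 * be3 x).

Definition wsr_feasible (g : gains) (P : R) (x : wsr_var) : Prop :=
  0 <= R1 x /\ 0 <= R2 x /\ 0 <= al1 x /\ 0 <= al2 x /\
  0 <= be1 x /\ 0 <= be2 x /\ 0 <= be3 x /\ 0 <= k1 x /\ 0 <= k2 x /\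
  R1 x <= Rmin (J1 g x) (J2 g P x) /\
  R2 x <= Rmin (J3 g x) (J4 g P x) /\
  R1 x + R2 x <= J5 g x /\
  al1 x + be1 x <= P /\
  al2 x + be2 x <= P /\
  k1 x * al1 x + k2 x * al2 x + be3 x <= P.

Definition wsr_obj (mu : R) (x : wsr_var) : R := mu * R1 x + (1 - mu) * R2 x.

Definition wsr_optimal (g : gains) (P mu : R) (x : wsr_var) : Prop :=
  wsr_feasible g P x /\
  forall y, wsr_feasible g P y -> wsr_obj mu y <= wsr_obj mu x.

From Stdlib Require Import Reals Lra.
From mathcomp Require Import all_boot all_order all_algebra.
From mathcomp Require Import all_classical all_reals all_analysis.
From mathcomp Require Import Rstruct Rstruct_topology.
Import numFieldNormedType.Exports.
Open Scope R_scope.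

(* Every bound [J_i] is nondecreasing in the powers [beta_1, beta_2, beta_3]
   carried by fresh information, so leftover power can always be moved there:
   it suffices to optimise over allocations that exhaust all three budgets.
   Such an allocation is described by the block Markov powers [alpha_i] and the
   relay powers [r_i = k_i alpha_i] spent on them, and in these variables the
   coherent gain [2 g g' sqrt k_i alpha_i = 2 g g' sqrt (r_i alpha_i)] is
   continuous.  The best weighted sum rate of an allocation is attained at a
   corner of its rate pentagon, so it is a continuous function on a compact set
   of reduced variables and has a maximiser; the corresponding full-power point
   is optimal for (WSR), and its relay budget is exhausted by construction. *)

Lemma Rmin_le_compat a b a' b' : a <= a' -> b <= b' -> Rmin a b <= Rmin a' b'.
Proof.
by move=> aa' bb'; apply: Rle_trans (Rle_min_compat_r _ _ _ aa') (Rle_min_compat_l _ _ _ bb').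
Qed.

Lemma sqrt_mul_sqr k a : 0 <= k -> 0 <= a -> sqrt (k * a * a) = sqrt k * a.
Proof. by move=> k_ge0 a_ge0; rewrite Rmult_assoc sqrt_mult_alt // sqrt_square. Qed.

(* Thanks to Stdlib's [r / 0 = 0], [r / a] is a valid share [k] with [k a <= r]
   also when [a = 0]. *)
Lemma div_mul_le r a : 0 <= a -> 0 <= r ->
  [/\ 0 <= r / a, r / a * a <= r & r / a * a * a = r * a].
Proof.
move=> a_ge0 r_ge0; case: (Rle_lt_or_eq_dec _ _ a_ge0) => [a_gt0 | <-].
- have -> : r / a * a = r by field; lra.
  have inva_gt0 : 0 < / a by apply: Rinv_0_lt_compat.
  by split; [apply: Rmult_le_pos; lra | lra | lra].
- by rewrite Rdiv_0_r !Rmult_0_r; split; lra.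
Qed.

Lemma share_split s1 s2 : 0 <= s1 -> 0 <= s2 ->
  [/\ 0 <= s1 / (s1 + s2) <= 1, (s1 + s2) * (s1 / (s1 + s2)) = s1
    & (s1 + s2) * (1 - s1 / (s1 + s2)) = s2].
Proof.
move=> s1_ge0 s2_ge0; case: (Rle_lt_or_eq_dec 0 (s1 + s2)) => [|sum_gt0 | sum0]; first lra.
- have inv_gt0 : 0 < / (s1 + s2) by apply: Rinv_0_lt_compat.
  split; [split | field | field]; try lra.
  + by apply: Rmult_le_pos; lra.
  + by apply: (Rmult_le_reg_l (s1 + s2)) => //; field_simplify; lra.
- have [-> ->] : s1 = 0 /\ s2 = 0 by lra.
  by rewrite Rplus_0_r Rdiv_0_r; split; lra.
Qed.

Lemma Cap_le x y : 0 <= x -> x <= y -> Cap x <= Cap y.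
Proof.
move=> x_ge0 /Rle_lt_or_eq_dec [xy | <-]; last exact: Rle_refl.
by apply/Rlt_le/ln_increasing; lra.
Qed.

Lemma Cap_ge0 x : 0 <= x -> 0 <= Cap x.
Proof. by move=> x_ge0; rewrite -ln_1 -[1]Rplus_0_r; apply: Cap_le; lra. Qed.

(* [Cap] clipped at [0]: unlike [Cap], which takes junk values at and below
   [-1], it is continuous on all of [R]. *)
Definition Cap0 (x : R) : R := Cap (Rmax 0 x).

Lemma Cap0E x : 0 <= x -> Cap0 x = Cap x.
Proof. by move=> x_ge0; rewrite /Cap0 Rmax_right. Qed.

Lemma Cap0_ge0 x : 0 <= Cap0 x.
Proof. exact/Cap_ge0/Rmax_l. Qed.

Lemma Cap0_le x y : x <= y -> Cap0 x <= Cap0 y.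
Proof. by move=> xy; apply: Cap_le; [apply: Rmax_l | apply: Rle_max_compat_l]. Qed.

Lemma Cap_le_Cap0 x y : 0 <= x -> x <= y -> Cap x <= Cap0 y.
Proof. by move=> x_ge0 xy; rewrite -(Cap0E _ x_ge0); apply: Cap0_le. Qed.

Lemma Cap0_le_Cap x y : 0 <= y -> x <= y -> Cap0 x <= Cap y.
Proof. by move=> y_ge0 xy; rewrite -(Cap0E _ y_ge0); apply: Cap0_le. Qed.

Section RatePentagon.

Variable mu : R.
Hypothesis mu01 : 0 <= mu <= 1.

(* The corner of the pentagon [r1 <= A, r2 <= B, r1 + r2 <= S] that favours
   the user with the larger weight. *)
Definition corner1 (A B S : R) := if Rle_dec (1/2) mu then A else Rmin A (S - B).
Definition corner2 (A B S : R) := if Rle_dec (1/2) mu then Rmin B (S - A) else B.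

Definition pentagon_max (A B S : R) :=
  mu * corner1 A B S + (1 - mu) * corner2 A B S.

Lemma pentagon_max_ub A B S r1 r2 :
  r1 <= A -> r2 <= B -> r1 + r2 <= S -> mu * r1 + (1 - mu) * r2 <= pentagon_max A B S.
Proof.
move=> r1A r2B r12S; rewrite /pentagon_max /corner1 /corner2.
case: Rle_dec => mu_half /=; rewrite /Rmin; case: Rle_dec => _.
- by apply: Rplus_le_compat; apply: Rmult_le_compat_l; lra.
- have hS : 0 <= (1 - mu) * (S - r1 - r2) by apply: Rmult_le_pos; lra.
  have hA' : 0 <= (2 * mu - 1) * (A - r1) by apply: Rmult_le_pos; lra.
  nra.
- by apply: Rplus_le_compat; apply: Rmult_le_compat_l; lra.
- have hS : 0 <= mu * (S - r1 - r2) by apply: Rmult_le_pos; lra.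
  have hB' : 0 <= (1 - 2 * mu) * (B - r2) by apply: Rmult_le_pos; lra.
  nra.
Qed.

Lemma corner_in_pentagon A B S : 0 <= A <= S -> 0 <= B <= S ->
  [/\ 0 <= corner1 A B S, 0 <= corner2 A B S, corner1 A B S <= A,
      corner2 A B S <= B & corner1 A B S + corner2 A B S <= S].
Proof.
rewrite /corner1 /corner2 => hA hB.
by case: Rle_dec => _ /=; rewrite /Rmin; case: Rle_dec => ?; split; lra.
Qed.

Lemma pentagon_max_le A B S A' B' S' : 0 <= A <= S -> 0 <= B <= S ->
  A <= A' -> B <= B' -> S <= S' -> pentagon_max A B S <= pentagon_max A' B' S'.
Proof.
move=> hA hB AA' BB' SS'.
have [_ _ c1A c2B c12S] := corner_in_pentagon _ _ _ hA hB.
by apply: pentagon_max_ub; lra.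
Qed.

End RatePentagon.

(* The SNR at a destination with direct gain [h] and relay gain [d], when the
   source spends [a] on its block Markov component and the relay spends [r] on the
   coherent repetition and [b] on the bin index.  Writing [r = k a], the coherent
   term [2 h d sqrt k a] becomes [2 h d sqrt (r a)]. *)
Definition relay_snr (P h d a r b : R) :=
  h ^ 2 * P + 2 * h * d * sqrt (r * a) + d ^ 2 * r + d ^ 2 * b.

Lemma relay_snr_ge0 P h d a r b : 0 <= P -> 0 <= h -> 0 <= d -> 0 <= r -> 0 <= b ->
  0 <= relay_snr P h d a r b.
Proof.
move=> P_ge0 h_ge0 d_ge0 r_ge0 b_ge0; rewrite /relay_snr.
have := sqrt_pos (r * a); have := pow2_ge_0 h; have := pow2_ge_0 d.
have := Rmult_le_pos _ _ h_ge0 d_ge0; nra.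
Qed.

Lemma relay_snr_le P h d a r b a' r' b' : 0 <= h -> 0 <= d ->
  r * a <= r' * a' -> r + b <= r' + b' -> relay_snr P h d a r b <= relay_snr P h d a' r' b'.
Proof.
move=> h_ge0 d_ge0 ra rb; rewrite /relay_snr.
have := sqrt_le_1_alt _ _ ra; have := pow2_ge_0 d.
have := Rmult_le_pos _ _ h_ge0 d_ge0; nra.
Qed.

Lemma J2_relay_snr g P x : 0 <= al1 x -> 0 <= k1 x ->
  J2 g P x = Cap (relay_snr P (g21 g) (g2r g) (al1 x) (k1 x * al1 x) (be3 x)).
Proof. by move=> ? ?; rewrite /J2 /relay_snr sqrt_mul_sqr //; congr Cap; ring. Qed.

Lemma J4_relay_snr g P x : 0 <= al2 x -> 0 <= k2 x ->
  J4 g P x = Cap (relay_snr P (g12 g) (g1r g) (al2 x) (k2 x * al2 x) (be3 x)).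
Proof. by move=> ? ?; rewrite /J4 /relay_snr sqrt_mul_sqr //; congr Cap; ring. Qed.

Section ContinuousRealFunctions.

Variable T : topologicalType.
Implicit Types f h : T -> R.

Lemma continuous_Rplus f h : continuous f -> continuous h ->
  continuous (fun p => Rplus (f p) (h p)).
Proof. by move=> cf ch p; apply: (@continuousD R R^o T f h p (cf p) (ch p)). Qed.

Lemma continuous_Rmult f h : continuous f -> continuous h ->
  continuous (fun p => Rmult (f p) (h p)).
Proof. by move=> cf ch p; apply: (@continuousM R T f h p (cf p) (ch p)). Qed.

Lemma continuous_Ropp f : continuous f -> continuous (fun p => Ropp (f p)).
Proof. by move=> cf p; apply: (@continuousN R R^o T f p (cf p)). Qed.

Lemma continuous_Rmin f h : continuous f -> continuous h ->
  continuous (fun p => Rmin (f p) (h p)).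
Proof.
move=> cf ch; have -> : (fun p => Rmin (f p) (h p)) = f \min h.
  by apply: funext => p; rewrite RminE.
by move=> p; exact: continuous_min (cf p) (ch p).
Qed.

Lemma continuous_sqrt_comp f : continuous f -> continuous (fun p => sqrt (f p)).
Proof.
move=> cf p; apply: (@continuous_comp _ _ _ f sqrt); first exact: cf.
rewrite (_ : sqrt = Num.sqrt); first exact: sqrt_continuous.
by apply: funext => y; rewrite RsqrtE.
Qed.

Lemma continuous_Cap0_comp f : continuous f -> continuous (fun p => Cap0 (f p)).
Proof.
move=> cf p; apply: (@continuous_comp _ _ _ f Cap0); first exact: cf.
rewrite /Cap0 /Cap (_ : Rpower.ln = @exp.ln R); last by apply: funext => y; rewrite RlnE.
apply: (@continuous_comp _ _ _ (fun x => 1 + Rmax 0 x) (@exp.ln R)).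
  rewrite (_ : (fun x => 1 + Rmax 0 x) = (fun x => 1 + (cst 0 \max id) x)).
    apply: (@continuousD R R^o R (fun _ => 1)); first exact: cst_continuous.
    by apply: continuous_max; [exact: cst_continuous | exact: cvg_id].
  by apply: funext => y; rewrite RmaxE.
have pos : 0 < 1 + Rmax 0 (f p) by have := Rmax_l 0 (f p); lra.
by apply: continuous_ln; apply/RltP.
Qed.

Lemma continuous_fst_comp (U V : topologicalType) (f : T -> U * V) :
  continuous f -> continuous (fun p => (f p).1).
Proof. by move=> cf p; apply: (@continuous_comp _ _ _ f fst); [exact: cf | exact: cvg_fst].
Qed.

Lemma continuous_snd_comp (U V : topologicalType) (f : T -> U * V) :
  continuous f -> continuous (fun p => (f p).2).
Proof. by move=> cf p; apply: (@continuous_comp _ _ _ f snd); [exact: cf | exact: cvg_snd].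
Qed.

End ContinuousRealFunctions.

Ltac solve_continuous :=
  cbv beta;
  lazymatch goal with
  | |- forall x, continuous_at x ?F =>
    lazymatch F with
    | fun _ => ?c => exact: cst_continuous
    | fst => move=> ?; exact: cvg_fst
    | snd => move=> ?; exact: cvg_snd
    | fun p => fst (@?f p) => apply: continuous_fst_comp; solve_continuous
    | fun p => snd (@?f p) => apply: continuous_snd_comp; solve_continuous
    | fun p => Rplus (@?f p) (@?h p) => apply: continuous_Rplus; solve_continuous
    | fun p => Rmult (@?f p) (@?h p) => apply: continuous_Rmult; solve_continuous
    | fun p => Ropp (@?f p) => apply: continuous_Ropp; solve_continuous
    | fun p => Rmin (@?f p) (@?h p) => apply: continuous_Rmin; solve_continuous
    | fun p => sqrt (@?f p) => apply: continuous_sqrt_comp; solve_continuous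
    | fun p => Cap0 (@?f p) => apply: continuous_Cap0_comp; solve_continuous
    end
  end.

Definition unit_box (p : R * R * R * R) : Prop :=
  [/\ 0 <= p.1.1.1 <= 1, 0 <= p.1.1.2 <= 1, 0 <= p.1.2 <= 1 & 0 <= p.2 <= 1].

Lemma unit_box_argmax (f : R * R * R * R -> R) : continuous f ->
  exists2 c, unit_box c & forall p, unit_box p -> f p <= f c.
Proof.
move=> cf; set I : set R := `[0%R, 1%R]%classic.
have memI y : I y <-> 0 <= y <= 1.
  rewrite /I /= in_itv /=; split; first by move=> /andP[/RleP ? /RleP ?].
  by move=> [? ?]; apply/andP; split; apply/RleP.
have boxE p : (I `*` I `*` I `*` I)%classic p <-> unit_box p.
  by rewrite /= !memI; split => [[[[? ?] ?] ?] | []].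
set K := (I `*` I `*` I `*` I)%classic.
have K0 : (K !=set0)%classic by exists (0, 0, 0, 0); apply/boxE; split => /=; lra.
have cI : compact I by exact: segment_compact.
have cK : compact K.
  by apply: compact_setX => //; apply: compact_setX => //; apply: compact_setX.
have [c Kc cmax] := compact_EVT_max K0 cK (continuous_subspaceT cf).
exists c; first by apply/boxE; move: Kc; rewrite inE.
by move=> p /boxE Kp; apply/RleP/cmax; rewrite inE.
Qed.

Section ReducedProblem.

Variables (g : gains) (P mu : R).
Hypotheses (g21_ge0 : 0 <= g21 g) (g2r_ge0 : 0 <= g2r g) (g12_ge0 : 0 <= g12 g)
  (g1r_ge0 : 0 <= g1r g) (P_gt0 : 0 < P) (mu01 : 0 <= mu <= 1).

Definition power_feasible (x : wsr_var) : Prop :=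
  0 <= al1 x /\ 0 <= al2 x /\ 0 <= be1 x /\ 0 <= be2 x /\ 0 <= be3 x /\ 0 <= k1 x /\
  0 <= k2 x /\ al1 x + be1 x <= P /\ al2 x + be2 x <= P /\
  k1 x * al1 x + k2 x * al2 x + be3 x <= P.

Lemma wsr_feasible_powers x : wsr_feasible g P x -> power_feasible x.
Proof. by move=> [_ [_ [? [? [? [? [? [? [? [_ [_ [_ [? [? ?]]]]]]]]]]]]]]; repeat split. Qed.

Definition wsr_value (x : wsr_var) : R :=
  pentagon_max mu (Rmin (J1 g x) (J2 g P x)) (Rmin (J3 g x) (J4 g P x)) (J5 g x).

Lemma wsr_obj_le_value x : wsr_feasible g P x -> wsr_obj mu x <= wsr_value x.
Proof.
move=> [_ [_ [_ [_ [_ [_ [_ [_ [_ [R1_le [R2_le [R12_le _]]]]]]]]]]]].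
exact: pentagon_max_ub.
Qed.

Lemma link_rates_range x : power_feasible x ->
  (0 <= Rmin (J1 g x) (J2 g P x) <= J5 g x) /\ (0 <= Rmin (J3 g x) (J4 g P x) <= J5 g x).
Proof.
move=> [al1_ge0 [al2_ge0 [be1_ge0 [be2_ge0 [be3_ge0 [k1_ge0 [k2_ge0 _]]]]]]].
have gb1 : 0 <= gr1 g ^ 2 * be1 x by apply: Rmult_le_pos => //; apply: pow2_ge_0.
have gb2 : 0 <= gr2 g ^ 2 * be2 x by apply: Rmult_le_pos => //; apply: pow2_ge_0.
have snr_ge0 h d a r : 0 <= h -> 0 <= d -> 0 <= r -> 0 <= Cap (relay_snr P h d a r (be3 x)).
  by move=> *; apply/Cap_ge0/relay_snr_ge0 => //; lra.
rewrite J2_relay_snr // J4_relay_snr //.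
split; split.
- by apply: Rmin_glb; [apply: Cap_ge0 | apply: snr_ge0 => //; apply: Rmult_le_pos].
- by apply: Rle_trans (Rmin_l _ _) _; apply: Cap_le; lra.
- by apply: Rmin_glb; [apply: Cap_ge0 | apply: snr_ge0 => //; apply: Rmult_le_pos].
- by apply: Rle_trans (Rmin_l _ _) _; apply: Cap_le; lra.
Qed.

Definition with_corner_rates (x : wsr_var) : wsr_var :=
  let A := Rmin (J1 g x) (J2 g P x) in
  let B := Rmin (J3 g x) (J4 g P x) in
  let S := J5 g x in
  mkVar (corner1 mu A B S) (corner2 mu A B S)
    (al1 x) (al2 x) (be1 x) (be2 x) (be3 x) (k1 x) (k2 x).

Lemma with_corner_rates_feasible x :
  power_feasible x -> wsr_feasible g P (with_corner_rates x).
Proof.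
move=> px; have [hA hB] := link_rates_range _ px.
have [c1_ge0 c2_ge0 c1A c2B c12S] := corner_in_pentagon mu _ _ _ hA hB.
case: px => [? [? [? [? [? [? [? [? [? ?]]]]]]]]].
by rewrite /wsr_feasible /with_corner_rates /=; repeat split.
Qed.

Lemma wsr_obj_corner_rates x : wsr_obj mu (with_corner_rates x) = wsr_value x.
Proof. by []. Qed.

(* The problem in the variables [a_i = al_i] and [r_i = k_i al_i] (the relay power
   spent on user [i]'s old message), with all remaining power on the new messages. *)
Definition reduced_feasible (a1 a2 r1 r2 : R) : Prop :=
  0 <= a1 <= P /\ 0 <= a2 <= P /\ 0 <= r1 /\ 0 <= r2 /\ r1 + r2 <= P.

Definition reduced_value (a1 a2 r1 r2 : R) : R :=
  pentagon_max mu
    (Rmin (Cap0 (gr1 g ^ 2 * (P - a1)))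
          (Cap0 (relay_snr P (g21 g) (g2r g) a1 r1 (P - r1 - r2))))
    (Rmin (Cap0 (gr2 g ^ 2 * (P - a2)))
          (Cap0 (relay_snr P (g12 g) (g1r g) a2 r2 (P - r1 - r2))))
    (Cap0 (gr1 g ^ 2 * (P - a1) + gr2 g ^ 2 * (P - a2))).

Lemma power_feasible_reduced x : power_feasible x ->
  reduced_feasible (al1 x) (al2 x) (k1 x * al1 x) (k2 x * al2 x).
Proof.
move=> [? [? [? [? [? [? [? [? [? ?]]]]]]]]].
by repeat split; try apply: Rmult_le_pos; lra.
Qed.

Lemma wsr_value_le_reduced x : power_feasible x ->
  wsr_value x <= reduced_value (al1 x) (al2 x) (k1 x * al1 x) (k2 x * al2 x).
Proof.
move=> px; have [hA hB] := link_rates_range _ px.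
case: px => [al1_ge0 [al2_ge0 [be1_ge0 [be2_ge0 [be3_ge0 [k1_ge0 [k2_ge0 [bud1 [bud2 bud3]]]]]]]]].
have gb1 : gr1 g ^ 2 * be1 x <= gr1 g ^ 2 * (P - al1 x).
  by apply: Rmult_le_compat_l; [apply: pow2_ge_0 | lra].
have gb2 : gr2 g ^ 2 * be2 x <= gr2 g ^ 2 * (P - al2 x).
  by apply: Rmult_le_compat_l; [apply: pow2_ge_0 | lra].
have gb1_ge0 : 0 <= gr1 g ^ 2 * be1 x by apply: Rmult_le_pos => //; apply: pow2_ge_0.
have gb2_ge0 : 0 <= gr2 g ^ 2 * be2 x by apply: Rmult_le_pos => //; apply: pow2_ge_0.
have ka1 : 0 <= k1 x * al1 x by apply: Rmult_le_pos.
have ka2 : 0 <= k2 x * al2 x by apply: Rmult_le_pos.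
apply: pentagon_max_le => //; rewrite ?J2_relay_snr ?J4_relay_snr //.
- apply: Rmin_le_compat; first exact: Cap_le_Cap0.
  apply: Cap_le_Cap0; first by apply: relay_snr_ge0 => //; lra.
  by apply: relay_snr_le => //; lra.
- apply: Rmin_le_compat; first exact: Cap_le_Cap0.
  apply: Cap_le_Cap0; first by apply: relay_snr_ge0 => //; lra.
  by apply: relay_snr_le => //; lra.
- by apply: Cap_le_Cap0; lra.
Qed.

Definition full_power_alloc (a1 a2 r1 r2 : R) : wsr_var :=
  mkVar 0 0 a1 a2 (P - a1) (P - a2) (P - r1 / a1 * a1 - r2 / a2 * a2) (r1 / a1) (r2 / a2).

Lemma full_power_alloc_feasible a1 a2 r1 r2 : reduced_feasible a1 a2 r1 r2 ->
  power_feasible (full_power_alloc a1 a2 r1 r2).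
Proof.
move=> [a1P [a2P [r1_ge0 [r2_ge0 r12P]]]].
have [? ? _] := div_mul_le r1 a1 ltac:(lra) r1_ge0.
have [? ? _] := div_mul_le r2 a2 ltac:(lra) r2_ge0.
by rewrite /power_feasible /=; repeat split; lra.
Qed.

Lemma reduced_le_full_power a1 a2 r1 r2 : reduced_feasible a1 a2 r1 r2 ->
  reduced_value a1 a2 r1 r2 <= wsr_value (full_power_alloc a1 a2 r1 r2).
Proof.
move=> [a1P [a2P [r1_ge0 [r2_ge0 r12P]]]].
have [k1_ge0 k1a1 k1a1a1] := div_mul_le r1 a1 ltac:(lra) r1_ge0.
have [k2_ge0 k2a2 k2a2a2] := div_mul_le r2 a2 ltac:(lra) r2_ge0.
have gp1 : 0 <= gr1 g ^ 2 * (P - a1) by apply: Rmult_le_pos; [apply: pow2_ge_0 | lra].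
have gp2 : 0 <= gr2 g ^ 2 * (P - a2) by apply: Rmult_le_pos; [apply: pow2_ge_0 | lra].
rewrite /wsr_value J2_relay_snr ?J4_relay_snr //=; try lra.
apply: pentagon_max_le => //.
- split; first by apply: Rmin_glb; apply: Cap0_ge0.
  by apply: Rle_trans (Rmin_l _ _) _; apply: Cap0_le; lra.
- split; first by apply: Rmin_glb; apply: Cap0_ge0.
  by apply: Rle_trans (Rmin_l _ _) _; apply: Cap0_le; lra.
- apply: Rmin_le_compat; first by apply: Cap0_le_Cap => /=; lra.
  apply: Cap0_le_Cap; first by apply: relay_snr_ge0 => //; nra.
  by apply: relay_snr_le => //; lra.
- apply: Rmin_le_compat; first by apply: Cap0_le_Cap => /=; lra.
  apply: Cap0_le_Cap; first by apply: relay_snr_ge0 => //; nra.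
  by apply: relay_snr_le => //; lra.
- by apply: Cap0_le_Cap => /=; lra.
Qed.

Lemma reduced_value_argmax : exists a1 a2 r1 r2, reduced_feasible a1 a2 r1 r2 /\
  forall b1 b2 s1 s2, reduced_feasible b1 b2 s1 s2 ->
    reduced_value b1 b2 s1 s2 <= reduced_value a1 a2 r1 r2.
Proof.
(* The unit box parametrises the reduced feasible set by [a_i = P u_i],
   [r1 = P s t], [r2 = P s (1 - t)]. *)
pose f p :=
  reduced_value (P * p.1.1.1) (P * p.1.1.2) (P * p.1.2 * p.2) (P * p.1.2 * (1 - p.2)).
have cf : continuous f.
  rewrite /f /reduced_value /pentagon_max /corner1 /corner2 /relay_snr /Rminus.
  by case: Rle_dec => _ /=; solve_continuous.
have [c [[c1 c1'] [c2 c2'] [c3 c3'] [c4 c4']] cmax] := unit_box_argmax _ cf.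
exists (P * c.1.1.1), (P * c.1.1.2), (P * c.1.2 * c.2), (P * c.1.2 * (1 - c.2)).
split.
  have Pc3 : 0 <= P * c.1.2 by apply: Rmult_le_pos; lra.
  by repeat split; nra.
move=> b1 b2 s1 s2 [b1P [b2P [s1_ge0 [s2_ge0 s12P]]]].
have [t01 ts1 ts2] := share_split _ _ s1_ge0 s2_ge0.
have /cmax : unit_box (b1 / P, b2 / P, (s1 + s2) / P, s1 / (s1 + s2)).
  have div01 x : 0 <= x <= P -> 0 <= x / P <= 1.
    move=> xP; have Pinv_gt0 : 0 < / P by apply: Rinv_0_lt_compat.
    have PPinv : P * / P = 1 by field; lra.
    by rewrite /Rdiv; split; nra.
  by split => /=; try exact: t01; apply: div01; lra.
rewrite /f /=.
have PdivK x : P * (x / P) = x by field; lra.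
by rewrite !PdivK ts1 ts2.
Qed.

End ReducedProblem.

Theorem lemma1 (g : gains) (P mu : R)
  (hg : 0 <= g21 g /\ 0 <= g2r g /\ 0 <= g12 g /\ 0 <= g1r g /\
        0 <= gr1 g /\ 0 <= gr2 g)
  (hP : 0 < P) (hmu : 0 <= mu <= 1) :
  exists x : wsr_var,
    wsr_optimal g P mu x /\
    al1 x + be1 x = P /\ al2 x + be2 x = P /\
    (0 < al1 x \/ 0 < al2 x -> k1 x * al1 x + k2 x * al2 x + be3 x = P).
Proof.
case: hg => g21_ge0 [g2r_ge0 [g12_ge0 [g1r_ge0 _]]].
have [a1 [a2 [r1 [r2 [red_a a_max]]]]] := reduced_value_argmax g P mu hP.
set x := full_power_alloc P a1 a2 r1 r2.
have px : power_feasible P x by apply: full_power_alloc_feasible.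
have value_bound y : wsr_feasible g P y -> wsr_obj mu y <= wsr_value g P mu x.
  move=> fy; have py := wsr_feasible_powers _ _ _ fy.
  apply: (Rle_trans _ (wsr_value g P mu y)); first exact: wsr_obj_le_value.
  apply: (Rle_trans _ (reduced_value g P mu (al1 y) (al2 y) (k1 y * al1 y) (k2 y * al2 y))).
    exact: wsr_value_le_reduced.
  apply: (Rle_trans _ (reduced_value g P mu a1 a2 r1 r2)); last exact: reduced_le_full_power.
  exact/a_max/power_feasible_reduced.
exists (with_corner_rates g P mu x); split; first split.
- exact: with_corner_rates_feasible.
- by move=> y /value_bound; rewrite wsr_obj_corner_rates.
- by rewrite /=; split; [ring | split; [ring | move=> _; ring]].
Qed.
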